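(* Let $\mathcal{P}=\{\alpha_i\}_{i=1}^{3g-3+n}$ be a pants decomposition of $S_{g,n}$ with Fenchel–Nielsen coordinates $(\ell_i,\tau_i)_{i=1}^{3g-3+n}$. Let $\mathcal{F}:\mathcal{T}_{g,n}\to\mathbb{R}_+$ be a function. Then $\mathcal{F}$ is bounding with respect to these Fenchel–Nielsen coordinates if and only if, for every $Y\in\mathcal{T}_{g,n}$ and every $i$, \[ \sup_{Z\in\mathrm{Mod}_{g,n}\cdot Y}\left\{\frac{\ell_i(Z)+|\tau_i(Z)|}{\mathcal{F}(Z)}\right\}<+\infty . \]
   Context: $\mathcal{T}_{g,n}$ is the Teichmüller space of $S_{g,n}$, an oriented surface of genus $g$ with $n>0$ punctures and $2g-2+n>0$. $\mathrm{Mod}_{g,n}$ is its mapping class group, acting by change of marking. $\ell_i$ is the hyperbolic length of $\alpha_i$ and $\tau_i$ is the Fenchel–Nielsen twist parameter along $\alpha_i$ (measured in length). For $\mathbf m=(m_1,\dots,m_{3g-3+n})\in\mathbb{Z}^{3g-3+n}$ let \[ \mathcal{C}^{\mathbf m}_{\mathcal P}=\{Y\in\mathcal{T}_{g,n}: m_i\ell_i(Y)\le\tau_i(Y)\le(m_i+1)\ell_i(Y)\ \text{for all } i\}. \] $\mathcal{F}$ is called bounding with respect to $(\ell_i,\tau_i)$ if for every $Y\in\mathcal{T}_{g,n}$ there is a constant $C>0$ with the following property: for every $L>0$, every $\mathbf m$, every $Z\in\mathrm{Mod}_{g,n}\cdot Y\cap\mathcal{C}^{\mathbf m}_{\mathcal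 P}\cap\mathcal{F}^{-1}([0,L])$ and every $i$, \[ \ell_i(Z)\le C\cdot\frac{L}{\max\{|m_i|,|m_i+1|\}}. \] *)

From Stdlib Require Import Reals Lra Lia ZArith.
Open Scope R_scope.

(* Number of curves in a pants decomposition of S_{g,n}. *)
Definition npants (g n : nat) : nat := (3 * g + n - 3)%nat.

(* Teichmueller space T_{g,n} is modelled abstractly as a type [T] endowed
   with Fenchel--Nielsen coordinates (ell i, tau i), i < N, w.r.t. a fixed
   pants decomposition: a bijection T -> (R_{>0} x R)^N. *)
Definition FN_coordinates (T : Type) (N : nat)
  (ell tau : nat -> T -> R) : Prop :=
  (forall Y i, (i < N)%nat -> 0 < ell i Y) /\
  (forall Y Y', (forall i, (i < N)%nat -> ell i Y = ell i Y' /\ tau i Y = tau i Y') ->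
                Y = Y') /\
  (forall l t : nat -> R, (forall i, (i < N)%nat -> 0 < l i) ->
     exists Y, forall i, (i < N)%nat -> ell i Y = l i /\ tau i Y = t i).

(* A group (the mapping class group) acting on T. *)
Record group_action (G T : Type) := {
  g_one : G;
  g_mul : G -> G -> G;
  g_inv : G -> G;
  g_mulA : forall a b c, g_mul a (g_mul b c) = g_mul (g_mul a b) c;
  g_mul1 : forall a, g_mul g_one a = a;
  g_mulV : forall a, g_mul (g_inv a) a = g_one;
  act : G -> T -> T;
  act1 : forall Y, act g_one Y = Y;
  actM : forall a b Y, act (g_mul a b) Y = act a (act b Y)
}.

Arguments act {G T} _ _ _.

Definition in_orbit {G T : Type} (A : group_action G T) (Y Z : T) : Prop :=
  exists phi : G, Z = act A phi Y.

Definition cell {T : Type} (N : nat) (ell tau : nat -> T -> R)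
  (m : nat -> Z) (Z0 : T) : Prop :=
  forall i, (i < N)%nat ->
    IZR (m i) * ell i Z0 <= tau i Z0 <= (IZR (m i) + 1) * ell i Z0.

Definition bounding {G T : Type} (A : group_action G T) (N : nat)
  (ell tau : nat -> T -> R) (F : T -> R) : Prop :=
  forall Y : T, exists C : R, 0 < C /\
    forall (L : R), 0 < L ->
    forall (m : nat -> Z) (Z0 : T),
      in_orbit A Y Z0 -> cell N ell tau m Z0 -> 0 <= F Z0 <= L ->
      forall i, (i < N)%nat ->
        ell i Z0 <= C * (L / Rmax (Rabs (IZR (m i))) (Rabs (IZR (m i) + 1))).

From Stdlib Require Import Reals ZArith Lra Lia Psatz.
From Coquelicot Require Import Rcomplements.
Open Scope R_scope.

(* If [m l <= t <= (m+1) l] with [l > 0] and [M = max(|m|, |m+1|)], then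
   [M l <= l + |t| <= 2 M l]: inside a twist cell the quantity [l + |t|] is
   comparable to [M l].  Hence the bounding inequality [l <= C L / M], taken
   with [L = F Z], is equivalent up to a factor 2 to [l + |t| <= C F Z].
   Every point lies in the cell given by the integer parts of [t / l], and
   there are finitely many curves, so the constants can be made uniform. *)

Definition cell_weight (m : Z) : R := Rmax (Rabs (IZR m)) (Rabs (IZR m + 1)).

Lemma cell_weight_ge1 (m : Z) : 1 <= cell_weight m.
Proof.
  unfold cell_weight.
  destruct (Z_le_gt_dec 0 m) as [hm | hm].
  - apply IZR_le in hm.
    rewrite (Rabs_right (IZR m + 1)) by lra.
    apply Rmax_Rle; right; lra.
  - assert (hm1 : (m <= -1)%Z) by lia; apply IZR_le in hm1.
    rewrite (Rabs_left (IZR m)) by lra.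
    apply Rmax_Rle; left; lra.
Qed.

Lemma cell_weight_comparable (m : Z) (l t : R) :
  0 < l -> IZR m * l <= t <= (IZR m + 1) * l ->
  Rabs t <= cell_weight m * l <= l + Rabs t.
Proof.
  intros hl ht; unfold cell_weight.
  destruct (Z_le_gt_dec 0 m) as [hm | hm].
  - apply IZR_le in hm.
    rewrite (Rabs_right (IZR m)), (Rabs_right (IZR m + 1)), Rmax_right by lra.
    rewrite Rabs_right by nra; split; nra.
  - assert (hm1 : (m <= -1)%Z) by lia; apply IZR_le in hm1.
    rewrite (Rabs_left (IZR m)), (Rabs_left1 (IZR m + 1)), Rmax_left by lra.
    rewrite Rabs_left1 by nra; split; nra.
Qed.

Lemma twist_interval_Int_part (l t : R) : 0 < l ->
  IZR (Int_part (t / l)) * l <= t <= (IZR (Int_part (t / l)) + 1) * l.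
Proof.
  intros hl.
  destruct (base_Int_part (t / l)) as [hlo hhi].
  assert (ht : t = t / l * l) by (field; lra).
  set (x := t / l) in *.
  split; nra.
Qed.

Lemma cell_Int_part {T : Type} (N : nat) (ell tau : nat -> T -> R) (Z0 : T) :
  (forall i, (i < N)%nat -> 0 < ell i Z0) ->
  cell N ell tau (fun i => Int_part (tau i Z0 / ell i Z0)) Z0.
Proof. intros hpos i hi; exact (twist_interval_Int_part _ _ (hpos i hi)). Qed.

Lemma bounded_above_finite_uniform {X : Type} (N : nat) (P : X -> Prop)
    (f : nat -> X -> R) :
  (forall i, (i < N)%nat -> exists B, forall x, P x -> f i x <= B) ->
  exists C, 0 < C /\ forall i, (i < N)%nat -> forall x, P x -> f i x <= C.
Proof.
  induction N as [| N IH]; intros hbd.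
  - exists 1; split; [lra | intros i hi; lia].
  - destruct IH as [C [hC HC]]; [intros i hi; apply hbd; lia |].
    destruct (hbd N (Nat.lt_succ_diag_r N)) as [B HB].
    pose proof (Rle_abs B); pose proof (Rabs_pos B).
    exists (C + Rabs B); split; [lra |].
    intros i hi x hx.
    destruct (Nat.eq_dec i N) as [-> | ne].
    + specialize (HB x hx); lra.
    + assert (hi' : (i < N)%nat) by lia.
      specialize (HC i hi' x hx); lra.
Qed.

Section Bounding.

Variables (G T : Type) (A : group_action G T) (N : nat).
Variables (ell tau : nat -> T -> R) (F : T -> R).
Hypothesis ell_pos : forall Y i, (i < N)%nat -> 0 < ell i Y.
Hypothesis F_pos : forall Z0, 0 < F Z0.

Lemma bounding_ratio_bounded : bounding A N ell tau F ->
  forall Y i, (i < N)%nat -> exists B, forall Z0, in_orbit A Y Z0 ->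
    (ell i Z0 + Rabs (tau i Z0)) / F Z0 <= B.
Proof.
  intros hb Y i hi.
  destruct (hb Y) as [C [hC HC]].
  exists (2 * C); intros Z0 hZ.
  set (m := fun j => Int_part (tau j Z0 / ell j Z0)).
  assert (hcell : cell N ell tau m Z0) by exact (cell_Int_part N ell tau Z0 (ell_pos Z0)).
  pose proof (ell_pos Z0 i hi) as hl; pose proof (F_pos Z0) as hf.
  pose proof (cell_weight_ge1 (m i)) as hM.
  destruct (cell_weight_comparable _ _ _ hl (hcell i hi)) as [ht _].
  assert (hMl : ell i Z0 * cell_weight (m i) <= C * F Z0).
  { apply Rle_div_r; [lra |]; rewrite <- Rmult_div_assoc.
    exact (HC (F Z0) hf m Z0 hZ hcell (conj (Rlt_le _ _ hf) (Rle_refl _)) i hi). }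
  apply Rle_div_l; [lra |]; nra.
Qed.

Lemma ratio_bounded_bounding :
  (forall Y i, (i < N)%nat -> exists B, forall Z0, in_orbit A Y Z0 ->
     (ell i Z0 + Rabs (tau i Z0)) / F Z0 <= B) ->
  bounding A N ell tau F.
Proof.
  intros hratio Y.
  destruct (bounded_above_finite_uniform N (in_orbit A Y)
              (fun i Z0 => (ell i Z0 + Rabs (tau i Z0)) / F Z0) (hratio Y))
    as [C [hC HC]].
  exists C; split; [exact hC |].
  intros L hL m Z0 hZ hcell [_ hFL] i hi.
  pose proof (ell_pos Z0 i hi) as hl; pose proof (F_pos Z0) as hf.
  pose proof (cell_weight_ge1 (m i)) as hM.
  destruct (cell_weight_comparable _ _ _ hl (hcell i hi)) as [_ hMl].
  assert (hsum : ell i Z0 + Rabs (tau i Z0) <= C * F Z0)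
    by (apply Rle_div_l; [lra | exact (HC i hi Z0 hZ)]).
  change (ell i Z0 <= C * (L / cell_weight (m i))).
  rewrite Rmult_div_assoc; apply Rle_div_r; [lra |]; nra.
Qed.

End Bounding.

Theorem proposition4p2
  (g n : nat) (hn : (0 < n)%nat) (hgn : (0 < 2 * g + n - 2)%nat)
  (T : Type) (ell tau : nat -> T -> R)
  (hFN : FN_coordinates T (npants g n) ell tau)
  (Mod : Type) (A : group_action Mod T)
  (F : T -> R) (hF : forall Z0, 0 < F Z0) :
  bounding A (npants g n) ell tau F <->
  (forall (Y : T) (i : nat), (i < npants g n)%nat ->
     exists B : R, forall Z0 : T, in_orbit A Y Z0 ->
       (ell i Z0 + Rabs (tau i Z0)) / F Z0 <= B).
Proof.
  destruct hFN as [ell_pos _].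
  split.
  - exact (bounding_ratio_bounded Mod T A _ ell tau F ell_pos hF).
  - exact (ratio_bounded_bounding Mod T A _ ell tau F ell_pos hF).
Qed.
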